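(* Assume the standing hypotheses, let $\sigma\in(0,1)$, $C_1>0$, $\gamma\in[0,2)$ and $C_8>0$. Then there exist $\rho>0$ and $\bar\mu\in(0,\hat\mu]$ such that the following holds for all $\mu\in(0,\bar\mu]$ and all $(x,\lambda)\in\mathcal B((x^*,\lambda^* ),\delta)$ with $x>0,\lambda>0$, $\|(x,\lambda)-(x^\mu,\lambda^\mu)\|<\rho$, $\|F_\mu(x,\lambda)\|\le C_1\mu$ and $\|(\Delta x_{\mathcal A}^N,\Delta\lambda_{\mathcal I}^N)\|\ge C_8\mu^\gamma$, where $(\Delta x^N,\Delta\lambda^N)$ is the Newton direction for $\mu^+=\sigma\mu$. Define $(\Delta x,\Delta\lambda)$ by: for $i\in\mathcal A$, $\Delta x_i\in\{\Delta x_i^S,\Delta x_i^C\}$ (chosen arbitrarily per index) and $\Delta\lambda_i=0$; for $i\in\mathcal I$, $\Delta x_i=0$ and $\Delta\lambda_i=\Delta\lambda_i^C$. With $(x_+^N,\lambda_+^N)=(x,\lambda)+(\Delta x^N,\Delta\lambda^N)$ and $(x_+,\lambda_+)=(x,\lambda)+(\Delta x,\Delta\lambda)$, $$\|(x_+^N,\lambda_+^N)-(x_+,\lambda_+)\|\le\|(x_+^N,\lambda_+^N)-(x,\lambda)\|.$$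
   Context: Problem: minimize $f(x)$ subject to $x\ge0$, $f:\mathbb R^n\to\mathbb R$ twice continuously differentiable with locally Lipschitz Hessian. Norms Euclidean; $e$ all-ones; $X=\mathrm{diag}(x)$, $\Lambda=\mathrm{diag}(\lambda)$; $F_\mu(x,\lambda)=\begin{bmatrix}\nabla f(x)-\lambda\\ \Lambda Xe-\mu e\end{bmatrix}$, $F'(x,\lambda)=\begin{bmatrix}\nabla^2f(x)&-I\\ \Lambda&X\end{bmatrix}$. The Newton direction for $\mu^+=\sigma\mu$ solves $F'(x,\lambda)(\Delta x^N,\Delta\lambda^N)=-F_{\mu^+}(x,\lambda)$. Approximations: $\Delta x_i^S=-\frac{x_i[\nabla f(x)]_i-\mu^+}{x_i[\nabla^2f(x)]_{ii}+\lambda_i}$, $\Delta x_i^C=-x_i+\mu^+/\lambda_i$, $\Delta\lambda_i^C=-\lambda_i+\mu^+/x_i$. Standing hypotheses: $(x^*,\lambda^* )$ satisfies $\nabla f(x^* )=\lambda^*$, $x^*\ge0$, $\lambda^*\ge0$, $x_i^*\lambda_i^*=0$, $x^*+\lambda^*>0$, $[\nabla^2f(x^* )]_{\mathcal I\mathcal I}\succ0$, where $\mathcal A=\{i:x^*_i=0\}$, $\mathcal I=\{i:x_i^*>0\}$; subscripts $\mathcal A,\mathcal I$ denote sub-vectors. $\delta>0$: $F'$ nonsingular on $\mathcal B((x^*,\lambda^* ),\delta)$ with $\|F'^{-1}\|\le M$; $\hat\mu>0$: for $\mu\in(0,\hat\mu]$ a Lipschitz barrier trajectory $(x^\mu,\lambda^\mu)\in\mathcal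 B((x^*,\lambda^* ),\delta)$ with $F_\mu(x^\mu,\lambda^\mu)=0$, $\|(x^\mu,\lambda^\mu)-(x^*,\lambda^* )\|\le C_4\mu$ exists. *)

From HB Require Import structures.
From mathcomp Require Import all_boot all_order all_algebra.
From mathcomp Require Import all_classical all_reals all_analysis.
Set Implicit Arguments. Unset Strict Implicit. Unset Printing Implicit Defensive.
Import Order.TTheory GRing.Theory Num.Theory.
Import numFieldNormedType.Exports.
Local Open Scope ring_scope.

Section Defs.
Variable R : realType.

Definition enorm m (v : 'cV[R]_m) : R := Num.sqrt (\sum_i (v i 0) ^+ 2).

Definition fnorm m k (A : 'M[R]_(m, k)) : R :=
  Num.sqrt (\sum_i \sum_j (A i j) ^+ 2).

Definition hadam n (l x : 'cV[R]_n) : 'cV[R]_n := \col_i (l i 0 * x i 0).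

Definition Fmu n (g : 'cV[R]_n -> 'cV[R]_n) (mu : R) (x l : 'cV[R]_n)
  : 'cV[R]_(n + n) :=
  col_mx (g x - l) (hadam l x - mu *: const_mx 1).

Definition Fprime n (H : 'cV[R]_n -> 'M[R]_n) (x l : 'cV[R]_n)
  : 'M[R]_(n + n) :=
  block_mx (H x) (- 1%:M) (diag_mx l^T) (diag_mx x^T).

Definition vpos n (v : 'cV[R]_n) := forall i, 0 < v i 0.
Definition vnneg n (v : 'cV[R]_n) := forall i, 0 <= v i 0.

Definition dxS n (g : 'cV[R]_n -> 'cV[R]_n) (H : 'cV[R]_n -> 'M[R]_n)
  (mup : R) (x l : 'cV[R]_n) (i : 'I_n) : R :=
  - ((x i 0 * g x i 0 - mup) / (x i 0 * H x i i + l i 0)).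
Definition dxC n (mup : R) (x l : 'cV[R]_n) (i : 'I_n) : R :=
  - x i 0 + mup / l i 0.
Definition dlC n (mup : R) (x l : 'cV[R]_n) (i : 'I_n) : R :=
  - l i 0 + mup / x i 0.

Definition active n (xs : 'cV[R]_n) (i : 'I_n) : bool := xs i 0 == 0.

Definition enorm_AI n (xs : 'cV[R]_n) (v w : 'cV[R]_n) : R :=
  Num.sqrt (\sum_(i | active xs i) (v i 0) ^+ 2
            + \sum_(i | ~~ active xs i) (w i 0) ^+ 2).

(* The combined step: for i in A, dx_i = dxS_i or dxC_i according to the
   arbitrary choice s i (true = S, false = C), dl_i = 0;
   for i in I, dx_i = 0, dl_i = dlC_i. *)
Definition comb_dx n (xs : 'cV[R]_n) (g : 'cV[R]_n -> 'cV[R]_n)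
  (H : 'cV[R]_n -> 'M[R]_n) (s : 'I_n -> bool) (mup : R) (x l : 'cV[R]_n)
  : 'cV[R]_n :=
  \col_i (if active xs i then (if s i then dxS g H mup x l i else dxC mup x l i)
          else 0).
Definition comb_dl n (xs : 'cV[R]_n) (mup : R) (x l : 'cV[R]_n) : 'cV[R]_n :=
  \col_i (if active xs i then 0 else dlC mup x l i).

End Defs.

From HB Require Import structures.
From mathcomp Require Import all_boot all_order all_algebra.
From mathcomp Require Import all_classical all_reals all_analysis.
From mathcomp Require Import ring lra.
Import Order.TTheory GRing.Theory Num.Theory.
Import numFieldNormedType.Exports.
Local Open Scope ring_scope.

(* Near the central path the Newton step for mu+ = sigma mu is dominated by
   its "active" part (dx^N_A, dl^N_I), so the cheap componentwise step
   (dx, dl) that reproduces exactly this part makes an error that is small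
   compared with the Newton step itself.

   Write N = (dx^N, dl^N), S = (dx, dl).  Off the active part, S vanishes,
   so |N - S|^2 and |N|^2 share the off-active terms, and the claim reduces
   to  sum_i e_i^2 <= |(dx^N_A, dl^N_I)|^2, where e_i is the error of S in
   its nonzero coordinate i (lemma step_comparison).  Strict complementarity
   gives a gap c with l_i >= c/2 on A and x_i >= c/2 on I near x*; together
   with |x_i l_i| = O(mu), a bounded Hessian and |N| = O(mu) (nonsingularity
   of F' and |F_(sigma mu)| = O(mu)), the Newton rows give |e_i| = O(mu^2)
   (section ApproximateStepError).  Finally  n (kappa mu^2)^2 <= (C8 mu^gamma)^2
   for small mu because gamma < 2. *)

Set Implicit Arguments. Unset Strict Implicit.

Section EuclideanNorm.
Variable R : realType.
Implicit Types (k : nat).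

Definition sqnorm k (v : 'cV[R]_k) : R := \sum_i (v i 0) ^+ 2.

Lemma sqnorm_ge0 k (v : 'cV[R]_k) : 0 <= sqnorm v.
Proof. by apply: sumr_ge0 => i _; rewrite sqr_ge0. Qed.

Lemma enorm_ge0 k (v : 'cV[R]_k) : 0 <= enorm v.
Proof. exact: sqrtr_ge0. Qed.

Lemma sqr_enorm k (v : 'cV[R]_k) : enorm v ^+ 2 = sqnorm v.
Proof. exact/sqr_sqrtr/sqnorm_ge0. Qed.

Lemma enorm_le k (v : 'cV[R]_k) a : 0 <= a -> sqnorm v <= a ^+ 2 -> enorm v <= a.
Proof. by move=> a0; rewrite -sqr_enorm ler_pXn2r ?nnegrE ?enorm_ge0. Qed.

Lemma enorm_lt k (v : 'cV[R]_k) a : 0 <= a -> sqnorm v < a ^+ 2 -> enorm v < a.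
Proof. by move=> a0; rewrite -sqr_enorm ltr_pXn2r ?nnegrE ?enorm_ge0. Qed.

Lemma sqnorm_le k (v : 'cV[R]_k) a : enorm v <= a -> sqnorm v <= a ^+ 2.
Proof.
move=> h; have a0 := le_trans (enorm_ge0 v) h.
by rewrite -sqr_enorm ler_pXn2r ?nnegrE ?enorm_ge0.
Qed.

Lemma enorm_opp k (v : 'cV[R]_k) : enorm (- v) = enorm v.
Proof. by congr Num.sqrt; apply: eq_bigr => i _; rewrite mxE sqrrN. Qed.

Lemma enorm_coord k (v : 'cV[R]_k) i : `|v i 0| <= enorm v.
Proof.
rewrite -sqrtr_sqr ler_sqrt ?sqnorm_ge0 // /sqnorm (bigD1 i) //= lerDl.
by apply: sumr_ge0 => j _; rewrite sqr_ge0.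
Qed.

Lemma sqnorm_col k1 k2 (a : 'cV[R]_k1) (b : 'cV[R]_k2) :
  sqnorm (col_mx a b) = sqnorm a + sqnorm b.
Proof.
rewrite /sqnorm big_split_ord /=.
by congr (_ + _); apply: eq_bigr => i _; rewrite ?col_mxEu ?col_mxEd.
Qed.

Lemma sub_col_mx k1 k2 (a a' : 'cV[R]_k1) (b b' : 'cV[R]_k2) :
  col_mx a b - col_mx a' b' = col_mx (a - a') (b - b').
Proof. by rewrite opp_col_mx add_col_mx. Qed.

Lemma enorm_colU k1 k2 (a : 'cV[R]_k1) (b : 'cV[R]_k2) :
  enorm a <= enorm (col_mx a b).
Proof. by apply: enorm_le (enorm_ge0 _) _; rewrite sqr_enorm sqnorm_col lerDl sqnorm_ge0. Qed.

Lemma sqnorm_add k (a b : 'cV[R]_k) : sqnorm (a + b) <= 2 * sqnorm a + 2 * sqnorm b.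
Proof.
rewrite /sqnorm !mulr_sumr -big_split /=; apply: ler_sum => i _; rewrite mxE.
have := sqr_ge0 (a i 0 - b i 0); rewrite !expr2; nra.
Qed.

Lemma enorm_add_half k (a b : 'cV[R]_k) r :
  enorm a < r / 2 -> enorm b <= r / 2 -> enorm (a + b) < r.
Proof.
move=> ha hb; have r0 : 0 <= r / 2 := le_trans (enorm_ge0 b) hb.
have r0' : 0 <= r by lra.
apply: enorm_lt => //; apply: le_lt_trans (sqnorm_add a b) _.
have hb2 : sqnorm b <= (r / 2) ^+ 2 := sqnorm_le hb.
have ha2 : sqnorm a < (r / 2) ^+ 2.
  by rewrite -sqr_enorm ltr_pXn2r ?nnegrE ?enorm_ge0.
have -> : r ^+ 2 = 2 * (r / 2) ^+ 2 + 2 * (r / 2) ^+ 2 by field.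
lra.
Qed.

Lemma fnorm_entry k1 k2 (A : 'M[R]_(k1, k2)) i j : `|A i j| <= fnorm A.
Proof.
have sq0 p : 0 <= \sum_q A p q ^+ 2 by apply: sumr_ge0 => q _; rewrite sqr_ge0.
rewrite /fnorm -sqrtr_sqr ler_sqrt; last by apply: sumr_ge0.
rewrite (bigD1 i) //= (bigD1 j) //= -addrA lerDl.
by apply: addr_ge0; [apply: sumr_ge0 => q _; rewrite sqr_ge0|apply: sumr_ge0].
Qed.

End EuclideanNorm.

Section ScalarEstimates.
Variable R : realType.

(* The complementarity row  a d + b d' = -(a b - m)  of the Newton system:
   the step -b + m/a, obtained by dropping the term b d', misses d by
   exactly -b d'/a.  Used for dx^C (a = l_i) and for dl^C (a = x_i). *)
Lemma compl_step_identity (a b d d' m : R) : a != 0 ->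
  a * d + b * d' = - (a * b - m) -> a * (d - (- b + m / a)) = - (b * d').
Proof.
move=> a0 h; have q : a * (m / a) = m by rewrite mulrC divfK.
rewrite mulrBr mulrDr q mulrN; lra.
Qed.

Lemma gap_product_bound (a b c P mu : R) :
  0 < c -> 0 <= b -> c / 2 <= a -> a * b <= P * mu -> b * c <= 2 * P * mu.
Proof. move=> c0 b0 ha hab; nra. Qed.

Lemma compl_step_bound (a b d' e c P K mu : R) :
  0 < c -> 0 < mu -> 0 <= P -> c / 2 <= a -> 0 <= b -> a * b <= P * mu ->
  `|d'| <= K * mu -> a * e = - (b * d') -> `|e| * c ^+ 2 <= 4 * P * K * mu ^+ 2.
Proof.
move=> c0 mu0 P0 ha b0 hab hd he.
have a0 : 0 < a by apply: lt_le_trans ha; rewrite divr_gt0.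
have hea : `|e| * a = b * `|d'|.
  by rewrite mulrC -(ger0_norm (ltW a0)) -normrM he normrN normrM ger0_norm.
have e0 := normr_ge0 e; have d0 := normr_ge0 d'.
have hc : c <= 2 * a by lra.
have h1 : `|e| * c ^+ 2 <= 2 * c * (b * `|d'|).
  rewrite -hea expr2; have := ler_wpM2l (mulr_ge0 e0 (ltW c0)) hc; nra.
have hbc := gap_product_bound c0 b0 ha hab.
have h2 : b * `|d'| * c <= 2 * P * mu * `|d'| by nra.
have h3 : 2 * P * mu * `|d'| <= 2 * P * mu * (K * mu).
  by apply: ler_wpM2l => //; nra.
rewrite expr2; nra.
Qed.

(* The diagonal step dx^S solves the two Newton rows of index i with the
   Hessian row replaced by its diagonal entry; with D = x_i H_ii + l_i its
   error times D equals x_i (H_ii dx^N_i - sum_j H_ij dx^N_j). *)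
Lemma diag_step_identity (D e xi Hii dd SH dl gi li m : R) :
  D = xi * Hii + li -> D != 0 -> e = dd - (- ((xi * gi - m) / D)) ->
  SH - dl = - (gi - li) -> li * dd + xi * dl = - (li * xi - m) ->
  D * e = xi * (Hii * dd - SH).
Proof.
move=> hD D0 -> h1 h2.
have q : D * ((xi * gi - m) / D) = xi * gi - m by rewrite mulrC divfK.
rewrite opprK mulrDr q hD.
have -> : SH = dl - gi + li by lra.
have h3 : xi * dl = - (li * xi - m) - li * dd by lra.
have -> : xi * (Hii * dd - (dl - gi + li)) =
  xi * Hii * dd - xi * dl + xi * gi - xi * li by ring.
rewrite h3; ring.
Qed.

Lemma diag_denominator_bound (xi h li c B P mu : R) :
  0 < c -> 0 < mu -> 0 <= B -> 0 <= P -> c / 2 <= li -> `|h| <= B -> 0 <= xi ->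
  xi * c <= 2 * P * mu -> mu * (8 * P * (B + 1)) <= c ^+ 2 -> c / 4 <= xi * h + li.
Proof.
move=> c0 mu0 B0 P0 hl hh x0 hx hm.
have h1 : - B <= h by move: hh; rewrite ler_norml => /andP[].
have h2 : xi * B * c <= 2 * P * mu * B.
  by rewrite mulrAC; apply: ler_wpM2r.
have h3 : 2 * P * mu * B * 4 <= c ^+ 2.
  apply: le_trans hm; have : 0 <= mu * P by nra.
  nra.
have h4 : xi * B * 4 <= c.
  have h5 : xi * B * 4 * c <= c * c by rewrite expr2 in h3; nra.
  by rewrite -(ler_pM2r c0).
have : - (xi * B) <= xi * h by rewrite -mulrN; apply: ler_wpM2l.
lra.
Qed.

Lemma diag_step_bound (e D xi Hii dd SH c P mu K B N : R) :
  0 < c -> 0 < mu -> 0 <= P -> 0 <= N -> c / 4 <= D ->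
  D * e = xi * (Hii * dd - SH) -> 0 <= xi -> xi * c <= 2 * P * mu ->
  `|Hii| <= B -> `|dd| <= K * mu -> `|SH| <= N * (B * (K * mu)) ->
  `|e| * c ^+ 2 <= 8 * P * (N + 1) * B * K * mu ^+ 2.
Proof.
move=> c0 mu0 P0 N0 hD hDe x0 hxc hH hd hS.
have D0 : 0 < D by apply: lt_le_trans hD; rewrite divr_gt0.
have e0 := normr_ge0 e.
have h1 : D * `|e| = xi * `|Hii * dd - SH|.
  by rewrite -(ger0_norm (ltW D0)) -normrM hDe normrM ger0_norm.
have B0 : 0 <= B := le_trans (normr_ge0 _) hH.
have K0 : 0 <= K * mu := le_trans (normr_ge0 _) hd.
have h2 : `|Hii * dd - SH| <= (N + 1) * (B * (K * mu)).
  apply: le_trans (ler_normB _ _) _; rewrite mulrDl mul1r addrC.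
  by apply: lerD => //; rewrite normrM; apply: ler_pM.
have h3 : `|e| * c <= 4 * (xi * `|Hii * dd - SH|) by rewrite -h1; nra.
have h4 : xi * `|Hii * dd - SH| <= xi * ((N + 1) * (B * (K * mu))).
  exact: ler_wpM2l.
have h5 : `|e| * c ^+ 2 <= 4 * (xi * c) * ((N + 1) * (B * (K * mu))).
  rewrite expr2; nra.
have h6 : 0 <= (N + 1) * (B * (K * mu)) by apply: mulr_ge0; [lra|exact: mulr_ge0].
apply: le_trans h5 _; have := ler_wpM2r h6 hxc; rewrite expr2; nra.
Qed.

Lemma shifted_target_sqr (a s m : R) : 0 < s < 1 -> 0 < m ->
  (a - s * m) ^+ 2 <= 2 * (a - m) ^+ 2 + 2 * m ^+ 2.
Proof.
move=> /andP[s0 s1] m0.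
have h : ((1 - s) * m) ^+ 2 <= m ^+ 2 by rewrite ler_pXn2r ?nnegrE //; nra.
have := sqr_ge0 (a - m - (1 - s) * m); rewrite !expr2 in h * => h'; nra.
Qed.

Lemma scale_below (C mu a : R) : 0 < mu -> mu <= a / (`|C| + 1) -> C * mu <= a.
Proof.
move=> mu0; have C0 := normr_ge0 C.
rewrite ler_pdivlMr ?ltr_wpDl // => h.
have := ler_wpM2r (ltW mu0) (real_ler_norm (num_real C)); nra.
Qed.

(* For gamma < 2, mu^2 = mu^gamma mu^(2-gamma) is at most s mu^gamma as soon
   as mu <= s^(1/(2-gamma)). *)
Lemma powR_small (gamma mu s : R) : gamma < 2 -> 0 < mu -> 0 < s ->
  mu <= s `^ (2 - gamma)^-1 -> mu ^+ 2 <= s * mu `^ gamma.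
Proof.
move=> g2 mu0 s0 hmu; have g2' : 0 < 2 - gamma by rewrite subr_gt0.
have split : mu ^+ 2 = mu `^ gamma * mu `^ (2 - gamma).
  rewrite -powRD; last by rewrite (lt0r_neq0 mu0) implybT.
  by rewrite addrC subrK -powR_mulrn // ltW.
have hle : mu `^ (2 - gamma) <= s.
  have := @ge0_ler_powR R (2 - gamma) (ltW g2') mu (s `^ (2 - gamma)^-1).
  rewrite !nnegrE ltW // powR_ge0 => /(_ isT isT hmu).
  by rewrite -powRrM mulVf ?gt_eqF // powRr1 // ltW.
by rewrite split mulrC; apply: ler_wpM2r; rewrite ?powR_ge0.
Qed.

Lemma dominated_square (q p s C8 N K : R) : 0 <= q -> 0 <= p -> 0 <= N -> 0 <= s ->
  s * (N * K ^+ 2 + 1) <= C8 -> q <= s * p -> N * (K * q) ^+ 2 <= (C8 * p) ^+ 2.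
Proof.
move=> q0 p0 N0 s0 hs hq; have NK0 : 0 <= N * K ^+ 2 by rewrite mulr_ge0 ?sqr_ge0.
have sp0 : 0 <= s * p := mulr_ge0 s0 p0.
have h1 : q ^+ 2 <= (s * p) ^+ 2 by rewrite ler_pXn2r.
have h2 : N * K ^+ 2 * s ^+ 2 <= C8 ^+ 2.
  have hs' : 0 <= s * (N * K ^+ 2 + 1) by rewrite mulr_ge0 // addr_ge0.
  apply: le_trans (_ : (s * (N * K ^+ 2 + 1)) ^+ 2 <= _); last first.
    by rewrite ler_pXn2r // nnegrE (le_trans hs').
  rewrite exprMn mulrC; apply: ler_wpM2l; [exact: sqr_ge0|rewrite expr2; nra].
have h3 := ler_wpM2l NK0 h1.
have h4 : N * K ^+ 2 * (s * p) ^+ 2 <= C8 ^+ 2 * p ^+ 2.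
  by rewrite exprMn mulrA; apply: ler_wpM2r; rewrite ?sqr_ge0.
rewrite !exprMn mulrA; exact: le_trans h3 h4.
Qed.

Lemma small_error_dominated (mu gamma C8 kappa N A : R) :
  0 < mu -> gamma < 2 -> 0 < C8 -> 0 <= N ->
  mu <= (C8 / (N * kappa ^+ 2 + 1)) `^ (2 - gamma)^-1 -> C8 * mu `^ gamma <= A ->
  N * (kappa * mu ^+ 2) ^+ 2 <= A ^+ 2.
Proof.
move=> mu0 g2 C80 N0 hmu hA.
have den : 0 < N * kappa ^+ 2 + 1 by rewrite ltr_wpDl // mulr_ge0 ?sqr_ge0.
have s0 : 0 < C8 / (N * kappa ^+ 2 + 1) by rewrite divr_gt0.
have Cp0 : 0 <= C8 * mu `^ gamma by rewrite mulr_ge0 ?powR_ge0 ?ltW.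
apply: le_trans (_ : (C8 * mu `^ gamma) ^+ 2 <= _); last first.
  by rewrite ler_pXn2r ?nnegrE // (le_trans Cp0).
apply: (dominated_square (sqr_ge0 _) (powR_ge0 _ _) N0 (ltW s0)).
  by rewrite divfK // gt_eqF.
exact: powR_small g2 mu0 s0 hmu.
Qed.

End ScalarEstimates.

Section KKTNeighbourhood.
Variables (R : realType) (n : nat).
Implicit Types (x l xs ls : 'cV[R]_n) (g : 'cV[R]_n -> 'cV[R]_n)
  (H : 'cV[R]_n -> 'M[R]_n).

Lemma strict_complementarity_gap xs ls :
  (forall i, xs i 0 * ls i 0 = 0) -> vpos (xs + ls) ->
  exists c, [/\ 0 < c, forall i, active xs i -> c <= ls i 0
                     & forall i, ~~ active xs i -> c <= xs i 0].
Proof.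
move=> hcompl hpos; pose c := \big[Order.min/1]_i (xs i 0 + ls i 0).
have hc i : c <= xs i 0 + ls i 0 by rewrite /c (bigD1 i) //= ge_min lexx.
exists c; split.
- apply: (big_ind (fun y => 0 < y)) => // [y z hy hz|i _]; first by rewrite lt_min hy hz.
  by have := hpos i; rewrite mxE.
- by move=> i /eqP xi0; have := hc i; rewrite xi0 add0r.
- move=> i /negbTE xi0; have /eqP := hcompl i.
  rewrite mulf_eq0 [_ == 0]xi0 /= => /eqP li0.
  by have := hc i; rewrite li0 addr0.
Qed.

Lemma hessian_locally_bounded H xs :
  (exists r L, 0 < r /\ forall y z, enorm (y - xs) < r -> enorm (z - xs) < r ->
     fnorm (H y - H z) <= L * enorm (y - z)) ->
  exists r B, [/\ 0 < r, 0 <= B & forall y, enorm (y - xs) < r ->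
                                   forall i j, `|H y i j| <= B].
Proof.
move=> [r [L [r0 hL]]]; exists r, (fnorm (H xs) + `|L| * r); split => //.
  by rewrite addr_ge0 ?sqrtr_ge0 // mulr_ge0 // ltW.
move=> y hy i j.
have hxs : enorm (xs - xs) < r.
  by rewrite subrr /enorm big1 ?sqrtr0 // => k _; rewrite mxE expr0n.
have -> : H y i j = H xs i j + (H y - H xs) i j by rewrite !mxE addrCA subrr addr0.
apply: le_trans (ler_normD _ _) _; apply: lerD; first exact: fnorm_entry.
apply: le_trans (fnorm_entry _ i j) _; apply: le_trans (hL y xs hy hxs) _.
apply: le_trans (ler_wpM2r (enorm_ge0 _) (real_ler_norm (num_real L))) _.
by apply: ler_wpM2l => //; exact: ltW.
Qed.

Lemma newton_rows H g x l (dx dl : 'cV[R]_n) m :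
  Fprime H x l *m col_mx dx dl = - Fmu g m x l ->
  (forall i, \sum_j H x i j * dx j 0 - dl i 0 = - (g x i 0 - l i 0)) /\
  (forall i, l i 0 * dx i 0 + x i 0 * dl i 0 = - (l i 0 * x i 0 - m)).
Proof.
rewrite /Fprime /Fmu mul_block_col opp_col_mx => /eq_col_mx[E1 E2].
split=> i.
  by have := congr1 (fun A : 'cV[R]_n => A i 0) E1; rewrite mulNmx mul1mx !mxE.
have := congr1 (fun A : 'cV[R]_n => A i 0) E2.
by rewrite !mul_diag_mx !mxE mulr1.
Qed.

Lemma Fmu_shift_bound g x l (sigma mu C1 : R) : 0 < sigma < 1 -> 0 < mu ->
  enorm (Fmu g mu x l) <= C1 * mu ->
  enorm (Fmu g (sigma * mu) x l) <= Num.sqrt (2 * C1 ^+ 2 + 2 * n%:R) * mu.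
Proof.
move=> hs mu0 hF.
have K0 : 0 <= 2 * C1 ^+ 2 + 2 * n%:R.
  by have := sqr_ge0 C1; have := ler0n R n; lra.
apply: enorm_le; first by rewrite mulr_ge0 ?sqrtr_ge0 ?ltW.
have := sqnorm_le hF; rewrite /Fmu !sqnorm_col !exprMn sqr_sqrtr //.
have hshift i : ((hadam l x - (sigma * mu) *: const_mx 1) i 0) ^+ 2 <=
    2 * ((hadam l x - mu *: const_mx 1) i 0) ^+ 2 + 2 * mu ^+ 2.
  by rewrite !mxE !mulr1; exact: shifted_target_sqr.
move=> hF2.
have hq : sqnorm (hadam l x - (sigma * mu) *: const_mx 1) <=
    2 * sqnorm (hadam l x - mu *: const_mx 1) + 2 * mu ^+ 2 * n%:R.
  apply: le_trans (ler_sum _ (fun i _ => hshift i)) _.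
  by rewrite big_split /= -mulr_sumr sumr_const card_ord mulr_natr.
have := sqnorm_ge0 (g x - l); lra.
Qed.

Lemma newton_step_bound H g x l (d : 'cV[R]_(n + n)) (m M K : R) :
  Fprime H x l \in unitmx ->
  (forall w, enorm (invmx (Fprime H x l) *m w) <= M * enorm w) ->
  Fprime H x l *m d = - Fmu g m x l -> enorm (Fmu g m x l) <= K ->
  enorm d <= `|M| * K.
Proof.
move=> hu hM hN hF.
have -> : d = invmx (Fprime H x l) *m (- Fmu g m x l) by rewrite -hN mulmxA mulVmx ?mul1mx.
apply: le_trans (hM _) _; rewrite enorm_opp.
apply: le_trans (ler_wpM2r (enorm_ge0 _) (real_ler_norm (num_real M))) _.
by rewrite ler_wpM2l.
Qed.

Lemma complementarity_product_bound g x l (mu C1 : R) i :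
  enorm (Fmu g mu x l) <= C1 * mu -> l i 0 * x i 0 <= (1 + C1) * mu.
Proof.
move=> hF; have := le_trans (enorm_coord _ (rshift n i)) hF.
rewrite /Fmu col_mxEd !mxE mulr1 ler_norml => /andP[_]; lra.
Qed.

Lemma coord_lower_bound k (p q s : 'cV[R]_k) (c : R) i :
  enorm (p - q) < c / 4 -> enorm (q - s) <= c / 4 -> c <= s i 0 -> c / 2 <= p i 0.
Proof.
move=> hpq hqs hs.
have := le_lt_trans (enorm_coord (p - q) i) hpq.
have := le_trans (enorm_coord (q - s) i) hqs.
rewrite !mxE ltr_norml ler_norml => /andP[h1 _] /andP[h2 _]; lra.
Qed.

Lemma near_trajectory_bounds xs ls x l (xm lm : 'cV[R]_n) (c r : R) :
  (forall i, active xs i -> c <= ls i 0) -> (forall i, ~~ active xs i -> c <= xs i 0) ->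
  enorm (col_mx x l - col_mx xm lm) < Order.min (c / 4) (r / 2) ->
  enorm (col_mx xm lm - col_mx xs ls) <= Order.min (c / 4) (r / 2) ->
  [/\ forall i, active xs i -> c / 2 <= l i 0,
      forall i, ~~ active xs i -> c / 2 <= x i 0 & enorm (x - xs) < r].
Proof.
rewrite lt_min le_min => hcA hcI /andP[hpc hpr] /andP[hqc hqr]; split.
- move=> i /hcA hc; have := coord_lower_bound (i := rshift n i) hpc hqc.
  by rewrite !col_mxEd; apply.
- move=> i /hcI hc; have := coord_lower_bound (i := lshift n i) hpc hqc.
  by rewrite !col_mxEu; apply.
apply: le_lt_trans (enorm_colU _ (l - ls)) _; rewrite -sub_col_mx.
rewrite -(subrK (col_mx xm lm) (col_mx x l)) -addrA.
exact: enorm_add_half hpr hqr.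
Qed.

Lemma step_comparison xs x l (dxN dlN dx dl : 'cV[R]_n) (e : R) :
  (forall i, active xs i -> dl i 0 = 0) -> (forall i, ~~ active xs i -> dx i 0 = 0) ->
  (forall i, `|if active xs i then dxN i 0 - dx i 0 else dlN i 0 - dl i 0| <= e) ->
  n%:R * e ^+ 2 <= enorm_AI xs dxN dlN ^+ 2 ->
  enorm (col_mx (x + dxN) (l + dlN) - col_mx (x + dx) (l + dl))
    <= enorm (col_mx (x + dxN) (l + dlN) - col_mx x l).
Proof.
move=> hdl hdx herr hAI.
pose E i := (if active xs i then dxN i 0 - dx i 0 else dlN i 0 - dl i 0) ^+ 2.
pose A i := if active xs i then dxN i 0 ^+ 2 else dlN i 0 ^+ 2.
pose W i := if active xs i then dlN i 0 ^+ 2 else dxN i 0 ^+ 2.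
apply: enorm_le (enorm_ge0 _) _; rewrite sqr_enorm !sub_col_mx !sqnorm_col.
rewrite /sqnorm -!big_split /=.
have -> : \sum_i (((x + dxN) - (x + dx)) i 0 ^+ 2 + ((l + dlN) - (l + dl)) i 0 ^+ 2)
    = \sum_i E i + \sum_i W i.
  rewrite -big_split; apply: eq_bigr => i _ /=; rewrite /E /W !mxE !opprD !addrA.
  by case: (boolP (active xs i)) => ha; rewrite ?(hdl i ha) ?(hdx i ha); ring.
have -> : \sum_i (((x + dxN) - x) i 0 ^+ 2 + ((l + dlN) - l) i 0 ^+ 2)
    = \sum_i A i + \sum_i W i.
  rewrite -big_split; apply: eq_bigr => i _ /=; rewrite /A /W !mxE.
  by case: (active xs i); ring.
apply: lerD => //.
have hA : \sum_i A i = enorm_AI xs dxN dlN ^+ 2.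
  rewrite /enorm_AI sqr_sqrtr; last by rewrite addr_ge0 // sumr_ge0 // => i _; rewrite sqr_ge0.
  rewrite /A (bigID (active xs)) /=.
  by congr (_ + _); apply: eq_bigr => i; [move=> ->|move/negbTE ->].
rewrite hA; apply: le_trans _ hAI; rewrite mulr_natl -[X in _ *+ X]card_ord -sumr_const.
apply: ler_sum => i _; rewrite /E -real_normK ?num_real // ler_pXn2r ?nnegrE //.
exact: le_trans (normr_ge0 _) (herr i).
Qed.

End KKTNeighbourhood.

Section ApproximateStepError.
Variables (R : realType) (n : nat) (g : 'cV[R]_n -> 'cV[R]_n) (H : 'cV[R]_n -> 'M[R]_n).
Variables (xs x l dxN dlN : 'cV[R]_n) (sigma mu C1 B K1 c : R).
Hypotheses (hc : 0 < c) (hmu : 0 < mu) (hC1 : 0 <= C1) (hB : 0 <= B).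
Hypotheses (hx : vpos x) (hl : vpos l).
Hypothesis hN : Fprime H x l *m col_mx dxN dlN = - Fmu g (sigma * mu) x l.
Hypothesis hdN : enorm (col_mx dxN dlN) <= K1 * mu.
Hypothesis hHx : forall i j, `|H x i j| <= B.
Hypothesis hxl : forall i, l i 0 * x i 0 <= (1 + C1) * mu.
Hypothesis hlA : forall i, active xs i -> c / 2 <= l i 0.
Hypothesis hxI : forall i, ~~ active xs i -> c / 2 <= x i 0.
Hypothesis hmuB : mu * (8 * (1 + C1) * (B + 1)) <= c ^+ 2.

Let P0 : 0 <= 1 + C1. Proof. exact: addr_ge0. Qed.

Lemma newton_coord_bounds j : `|dxN j 0| <= K1 * mu /\ `|dlN j 0| <= K1 * mu.
Proof.
split; apply: le_trans hdN.
  by have := enorm_coord (col_mx dxN dlN) (lshift n j); rewrite col_mxEu.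
by have := enorm_coord (col_mx dxN dlN) (rshift n j); rewrite col_mxEd.
Qed.

Lemma diag_step_error i : active xs i ->
  `|dxN i 0 - dxS g H (sigma * mu) x l i| * c ^+ 2
    <= 8 * (1 + C1) * (n%:R + 1) * B * K1 * mu ^+ 2.
Proof.
move=> ha; have [grad compl] := newton_rows hN.
have x0 : 0 <= x i 0 := ltW (hx i).
have hxc := gap_product_bound hc x0 (hlA ha) (hxl i).
set D := x i 0 * H x i i + l i 0.
have hD : c / 4 <= D.
  exact: diag_denominator_bound hc hmu hB P0 (hlA ha) (hHx i i) x0 hxc hmuB.
have D0 : D != 0 by apply: lt0r_neq0; apply: lt_le_trans hD; rewrite divr_gt0.
have hSH : `|\sum_j H x i j * dxN j 0| <= n%:R * (B * (K1 * mu)).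
  apply: le_trans (ler_norm_sum _ _ _) _.
  rewrite -[X in X%:R]card_ord mulr_natl -sumr_const; apply: ler_sum => j _.
  by rewrite normrM; apply: ler_pM; rewrite ?normr_ge0 ?hHx ?(newton_coord_bounds j).1.
have hDe := diag_step_identity (erefl D) D0 (erefl _) (grad i) (compl i).
exact: diag_step_bound hc hmu P0 (ler0n _ _) hD hDe x0 hxc (hHx i i)
  (newton_coord_bounds i).1 hSH.
Qed.

Lemma compl_x_error i : active xs i ->
  `|dxN i 0 - dxC (sigma * mu) x l i| * c ^+ 2 <= 4 * (1 + C1) * K1 * mu ^+ 2.
Proof.
move=> ha; have [_ compl] := newton_rows hN.
have he := compl_step_identity (lt0r_neq0 (hl i)) (compl i).
exact: compl_step_bound hc hmu P0 (hlA ha) (ltW (hx i)) (hxl i)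
  (newton_coord_bounds i).2 he.
Qed.

Lemma compl_l_error i : ~~ active xs i ->
  `|dlN i 0 - dlC (sigma * mu) x l i| * c ^+ 2 <= 4 * (1 + C1) * K1 * mu ^+ 2.
Proof.
move=> ha; have [_ compl] := newton_rows hN.
have compl' : x i 0 * dlN i 0 + l i 0 * dxN i 0 = - (x i 0 * l i 0 - sigma * mu).
  by rewrite addrC [x i 0 * l i 0]mulrC; exact: compl.
have he := compl_step_identity (lt0r_neq0 (hx i)) compl'.
have hxl' : x i 0 * l i 0 <= (1 + C1) * mu by rewrite mulrC.
exact: compl_step_bound hc hmu P0 (hxI ha) (ltW (hl i)) hxl'
  (newton_coord_bounds i).1 he.
Qed.

Lemma approx_step_error (s : 'I_n -> bool) i :
  `|if active xs i then dxN i 0 - comb_dx xs g H s (sigma * mu) x l i 0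
    else dlN i 0 - comb_dl xs (sigma * mu) x l i 0| * c ^+ 2
  <= 8 * (1 + C1) * (n%:R + 1) * (B + 1) * K1 * mu ^+ 2.
Proof.
have K10 : 0 <= K1.
  by have := le_trans (enorm_ge0 _) hdN; rewrite (pmulr_lge0 _ hmu).
have t0 : 0 <= (1 + C1) * K1 * mu ^+ 2.
  by apply: mulr_ge0; [exact: mulr_ge0|exact: sqr_ge0].
have N1 : 0 <= n%:R + 1 :> R by rewrite addr_ge0 ?ler0n.
have NB1 : 1 <= (n%:R + 1) * (B + 1) by rewrite mulr_ege1 // lerDr ?ler0n.
have hS : 8 * (1 + C1) * (n%:R + 1) * B * K1 * mu ^+ 2
    <= 8 * (1 + C1) * (n%:R + 1) * (B + 1) * K1 * mu ^+ 2.
  have -> : 8 * (1 + C1) * (n%:R + 1) * B * K1 * mu ^+ 2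
    = (8 * (n%:R + 1) * B) * ((1 + C1) * K1 * mu ^+ 2) by ring.
  have -> : 8 * (1 + C1) * (n%:R + 1) * (B + 1) * K1 * mu ^+ 2
    = (8 * (n%:R + 1) * (B + 1)) * ((1 + C1) * K1 * mu ^+ 2) by ring.
  apply: ler_wpM2r => //; apply: ler_wpM2l; last by rewrite lerDl.
  by rewrite mulr_ge0.
have hC : 4 * (1 + C1) * K1 * mu ^+ 2
    <= 8 * (1 + C1) * (n%:R + 1) * (B + 1) * K1 * mu ^+ 2.
  have -> : 4 * (1 + C1) * K1 * mu ^+ 2 = 4 * ((1 + C1) * K1 * mu ^+ 2) by ring.
  have -> : 8 * (1 + C1) * (n%:R + 1) * (B + 1) * K1 * mu ^+ 2
    = (8 * (n%:R + 1) * (B + 1)) * ((1 + C1) * K1 * mu ^+ 2) by ring.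
  by apply: ler_wpM2r => //; lra.
rewrite !mxE; case: (boolP (active xs i)) => ha.
  case: (s i); [exact: le_trans (diag_step_error ha) hS|].
  exact: le_trans (compl_x_error ha) hC.
exact: le_trans (compl_l_error ha) hC.
Qed.

End ApproximateStepError.

Unset Implicit Arguments. Set Strict Implicit.

Theorem proposition3 (R : realType) (n : nat)
  (f : 'cV[R]_n -> R) (g : 'cV[R]_n -> 'cV[R]_n) (H : 'cV[R]_n -> 'M[R]_n)
  (* f is C^2 with gradient g and Hessian H; the Hessian is continuous and
     locally Lipschitz *)
  (hfd : forall x, differentiable f x)
  (hg : forall x v, 'd f x v = (v^T *m g x) 0 0)
  (hgd : forall x, differentiable g x)
  (hH : forall x v, 'd g x v = H x *m v)
  (hHc : continuous H)
  (hHlip : forall x0, exists r, exists L, 0 < r /\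
      forall y z, enorm (y - x0) < r -> enorm (z - x0) < r ->
        fnorm (H y - H z) <= L * enorm (y - z))
  (* the KKT point *)
  (xs ls : 'cV[R]_n)
  (hKKT : g xs = ls) (hxs : vnneg xs) (hls : vnneg ls)
  (hcompl : forall i, xs i 0 * ls i 0 = 0)
  (hstrict : vpos (xs + ls))
  (hpd : forall v : 'cV[R]_n, v != 0 -> (forall i, active xs i -> v i 0 = 0) ->
      0 < (v^T *m H xs *m v) 0 0)
  (* nonsingularity of F' on the ball with ||F'^{-1}|| <= M *)
  (delta M : R) (hdelta : 0 < delta)
  (hFp : forall x l, enorm (col_mx x l - col_mx xs ls) < delta ->
      Fprime H x l \in unitmx /\
      forall w, enorm (invmx (Fprime H x l) *m w) <= M * enorm w)
  (* the barrier trajectory *)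
  (muhat C4 : R) (hmuhat : 0 < muhat)
  (xmu lmu : R -> 'cV[R]_n)
  (htrajlip : exists Lt, forall m1 m2, 0 < m1 <= muhat -> 0 < m2 <= muhat ->
      enorm (col_mx (xmu m1) (lmu m1) - col_mx (xmu m2) (lmu m2))
        <= Lt * `|m1 - m2|)
  (htrajball : forall mu, 0 < mu <= muhat ->
      enorm (col_mx (xmu mu) (lmu mu) - col_mx xs ls) < delta)
  (htrajF : forall mu, 0 < mu <= muhat -> Fmu g mu (xmu mu) (lmu mu) = 0)
  (htrajC4 : forall mu, 0 < mu <= muhat ->
      enorm (col_mx (xmu mu) (lmu mu) - col_mx xs ls) <= C4 * mu)
  (* parameters of the proposition *)
  (sigma C1 gamma C8 : R)
  (hsigma : 0 < sigma < 1) (hC1 : 0 < C1) (hgamma : 0 <= gamma < 2)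
  (hC8 : 0 < C8) :
  exists rho mubar, 0 < rho /\ 0 < mubar <= muhat /\
    forall mu, 0 < mu <= mubar ->
    forall x l : 'cV[R]_n,
      enorm (col_mx x l - col_mx xs ls) < delta ->
      vpos x -> vpos l ->
      enorm (col_mx x l - col_mx (xmu mu) (lmu mu)) < rho ->
      enorm (Fmu g mu x l) <= C1 * mu ->
    forall dxN dlN : 'cV[R]_n,
      Fprime H x l *m col_mx dxN dlN = - Fmu g (sigma * mu) x l ->
      enorm_AI xs dxN dlN >= C8 * powR mu gamma ->
    forall s : 'I_n -> bool,
      let dx := comb_dx xs g H s (sigma * mu) x l in
      let dl := comb_dl xs (sigma * mu) x l in
      enorm (col_mx (x + dxN) (l + dlN) - col_mx (x + dx) (l + dl))
        <= enorm (col_mx (x + dxN) (l + dlN) - col_mx x l).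
Proof.
have [c [c0 hcA hcI]] := strict_complementarity_gap hcompl hstrict.
have [r [B [r0 B0 hB]]] := hessian_locally_bounded (hHlip xs).
have [_ g2] := andP hgamma.
pose rho := Order.min (c / 4) (r / 2).
pose K1 := `|M| * Num.sqrt (2 * C1 ^+ 2 + 2 * n%:R).
pose kappa := 8 * (1 + C1) * (n%:R + 1) * (B + 1) * K1 / c ^+ 2.
pose s := C8 / (n%:R * kappa ^+ 2 + 1).
have rho0 : 0 < rho by rewrite lt_min !divr_gt0.
have B8 : 0 < 8 * (1 + C1) * (B + 1) by rewrite !mulr_gt0 // ltr_wpDl // ltW.
have s0 : 0 < s by rewrite divr_gt0 // ltr_wpDl // mulr_ge0 ?sqr_ge0.
exists rho, (Order.min muhat (Order.min (rho / (`|C4| + 1))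
  (Order.min (c ^+ 2 / (8 * (1 + C1) * (B + 1))) (s `^ (2 - gamma)^-1)))).
split=> //; split.
  by rewrite !lt_min hmuhat !divr_gt0 ?exprn_gt0 ?powR_gt0 ?ltr_wpDl //= ge_min lexx.
move=> mu /andP[mu0]; rewrite !le_min => /and4P[hmuh hmurho hmuB hmus].
move=> x l hball xp lp hrho hF dxN dlN hN hAI sel /=.
have hC4 : enorm (col_mx (xmu mu) (lmu mu) - col_mx xs ls) <= rho.
  by apply: le_trans (htrajC4 _ _) (scale_below mu0 hmurho); rewrite mu0.
have [hlA hxI hxr] := near_trajectory_bounds hcA hcI hrho hC4.
have [hu hM] := hFp x l hball.
have hdN : enorm (col_mx dxN dlN) <= K1 * mu.
  by rewrite -mulrA; exact: newton_step_bound hu hM hN (Fmu_shift_bound hsigma mu0 hF).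
have hmuB' : mu * (8 * (1 + C1) * (B + 1)) <= c ^+ 2 by rewrite -ler_pdivlMr.
have herr := approx_step_error c0 mu0 (ltW hC1) B0 xp lp hN hdN (hB x hxr)
  (fun i => complementarity_product_bound i hF) hlA hxI hmuB'.
apply: (@step_comparison R n xs x l dxN dlN _ _ (kappa * mu ^+ 2)).
- by move=> i ha; rewrite mxE ha.
- by move=> i ha; rewrite mxE (negbTE ha).
- by move=> i; rewrite [kappa * _]mulrAC ler_pdivlMr ?exprn_gt0 //; exact: herr.
- exact: small_error_dominated mu0 g2 hC8 (ler0n _ _) hmus hAI.
Qed.
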